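(* Let $\Omega\subset\mathbb{R}^d$ be a closed $\eta$-prox-regular set for some $\eta>0$. Then the map $\Omega\times\mathbb{R}^d\ni(x,v)\mapsto|P_x(v)|^2$ is lower semicontinuous, and for each fixed $x\in\Omega$ the map $\mathbb{R}^d\ni v\mapsto|P_x(v)|^2$ is convex.
   Context: For closed $S$, $P_S(y)$ is the set of nearest points of $S$ to $y$; the proximal normal cone is $N^P(S,x)=\{v:\exists\alpha>0,\ x\in P_S(x+\alpha v)\}$; $S$ is $\eta$-prox-regular if for every $x\in\partial S$ and $v\in N^P(S,x)$ with $|v|=1$, $B_\eta(x+\eta v)\cap S=\emptyset$ (open ball). The Clarke tangent cone $T(\Omega,x)$ is the set of $v$ such that for all $t_n\searrow0$ and $x_n\in\Omega$ with $x_n\to x$ there exist $v_n\to v$ with $x_n+t_nv_n\in\Omega$; it is a closed convex cone, and $P_x(v)$ denotes the unique nearest point of $T(\Omega,x)$ to $v$. *)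

(* R^d is modelled as 'rV[R]_d (R : realType) with
   its library topology (equivalent to the Euclidean one); the Euclidean norm
   is defined explicitly below. *)
From HB Require Import structures.
From mathcomp Require Import all_boot all_order all_algebra.
From mathcomp Require Import all_classical all_reals all_analysis.
Set Implicit Arguments. Unset Strict Implicit. Unset Printing Implicit Defensive.
Import Order.TTheory GRing.Theory Num.Theory.
Import numFieldNormedType.Exports.
Local Open Scope classical_set_scope.
Local Open Scope ring_scope.

Section Defs.
Variables (R : realType) (d : nat).
Notation V := 'rV[R]_d.

Definition enorm2 (v : V) : R := \sum_(i < d) (v ord0 i) ^+ 2.
Definition enorm (v : V) : R := Num.sqrt (enorm2 v).

Definition nearest (S : set V) (y p : V) : Prop :=
  S p /\ forall z, S z -> enorm (y - p) <= enorm (y - z).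

Definition prox_normal (S : set V) (x : V) : set V :=
  [set v | exists2 a : R, 0 < a & nearest S (x + a *: v) x].

Definition eball (c : V) (r : R) : set V := [set y | enorm (y - c) < r].

Definition boundary (S : set V) : set V := closure S `\` interior S.

Definition prox_regular (S : set V) (eta : R) : Prop :=
  forall x v, boundary S x -> prox_normal S x v -> enorm v = 1 ->
    eball (x + eta *: v) eta `&` S = set0.

Definition clarke_tangent (Om : set V) (x : V) : set V :=
  [set v | forall (t : R^nat) (xs : nat -> V),
     (forall n, 0 < t n) -> (forall n, t n.+1 <= t n) -> t @ \oo --> 0 ->
     (forall n, Om (xs n)) -> xs @ \oo --> x ->
     exists vs : nat -> V, vs @ \oo --> v /\ forall n, Om (xs n + t n *: vs n)].

(* P_x(v): the (unique) nearest point of T(Omega,x) to v *)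
Definition proj_tangent (Om : set V) (x v : V) : V :=
  xget 0 [set p | nearest (clarke_tangent Om x) v p].

Definition lsc_on (T : topologicalType) (D : set T) (f : T -> R) : Prop :=
  forall z, D z -> forall a : R, a < f z ->
    exists2 W, nbhs z W & forall y, W y -> D y -> a < f y.

Definition convex_fun (f : V -> R) : Prop :=
  forall (u w : V) (t : R), 0 <= t <= 1 ->
    f (t *: u + (1 - t) *: w) <= t * f u + (1 - t) * f w.
End Defs.

(* For [y] in [Om], call [n] an [eta]-normal at [y] if [2 eta <n, y' - y> <= |n| |y' - y|^2]
   for all [y'] in [Om]. Prox-regularity says exactly that every proximal normal is an
   [eta]-normal, so the [eta]-normals form a closed convex cone [N(y)], and its graph is
   closed in [(y, n)]. Testing the definition of [T(Om, y)] along constant sequences shows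
   [T(Om, y) <= N(y)^o]; conversely, projecting [y_k + t_k w] back onto [Om] produces
   [eta]-normals whose closed graph forces the difference quotients to converge to [w] for
   [w] in [N(y)^o]. So [T(Om, y) = N(y)^o] is a closed convex cone and
   [|P_y v|^2 = sup_{k in T(Om, y)} (2 <v, k> - |k|^2)] is convex in [v]. For lower
   semicontinuity at [(x, v)] with [p = P_x v], let [q] be the projection of [p] onto
   [N(y)]: by Moreau's decomposition [p - q] lies in [T(Om, y)], and [q] is small for [y]
   near [x] by the closed graph, so [|P_y w|^2 >= 2 <w, p - q> - |p - q|^2] is nearly
   [|p|^2]. *)

From HB Require Import structures.
From mathcomp Require Import all_boot all_order all_algebra.
From mathcomp Require Import all_classical all_reals all_analysis.
From mathcomp Require Import ring lra.
Import Order.TTheory GRing.Theory Num.Theory.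
Import numFieldNormedType.Exports.
Set Implicit Arguments. Unset Strict Implicit. Unset Printing Implicit Defensive.
Local Open Scope classical_set_scope.
Local Open Scope ring_scope.

Local Ltac row_ring := apply/rowP => i; rewrite !mxE; ring.

Section Euclidean.
Variables (R : realType) (d : nat).
Local Notation V := 'rV[R]_d.
Local Notation en := (@enorm R d).
Local Notation en2 := (@enorm2 R d).

Definition dot (u v : V) : R := \sum_(i < d) u ord0 i * v ord0 i.

Lemma dotC u v : dot u v = dot v u.
Proof. by apply: eq_bigr => i _; rewrite mulrC. Qed.

Lemma dotDl u v w : dot (u + v) w = dot u w + dot v w.
Proof. by rewrite /dot -big_split; apply: eq_bigr => i _; rewrite !mxE mulrDl. Qed.

Lemma dotZl a u v : dot (a *: u) v = a * dot u v.
Proof. by rewrite /dot mulr_sumr; apply: eq_bigr => i _; rewrite !mxE mulrA. Qed.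

Lemma dotNl u v : dot (- u) v = - dot u v.
Proof. by rewrite -scaleN1r dotZl mulN1r. Qed.

Lemma dotBl u v w : dot (u - v) w = dot u w - dot v w.
Proof. by rewrite dotDl dotNl. Qed.

Lemma dotDr u v w : dot w (u + v) = dot w u + dot w v.
Proof. by rewrite dotC dotDl !(dotC w). Qed.

Lemma dotZr a u v : dot v (a *: u) = a * dot v u.
Proof. by rewrite dotC dotZl dotC. Qed.

Lemma dotNr u v : dot v (- u) = - dot v u.
Proof. by rewrite dotC dotNl dotC. Qed.

Lemma dotBr u v w : dot w (u - v) = dot w u - dot w v.
Proof. by rewrite dotDr dotNr. Qed.

Lemma dot0l v : dot 0 v = 0.
Proof. by rewrite -(scale0r 0) dotZl mul0r. Qed.

Lemma dot0r v : dot v 0 = 0.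
Proof. by rewrite dotC dot0l. Qed.

Lemma enorm2_dot v : en2 v = dot v v.
Proof. by apply: eq_bigr => i _; rewrite expr2. Qed.

Lemma enorm2_ge0 v : 0 <= en2 v.
Proof. by apply: sumr_ge0 => i _; apply: sqr_ge0. Qed.

Lemma enorm_ge0 v : 0 <= en v.
Proof. exact: sqrtr_ge0. Qed.

Lemma sqr_enorm v : en v ^+ 2 = en2 v.
Proof. exact: sqr_sqrtr (enorm2_ge0 v). Qed.

Lemma enorm_mul_self v : en v * en v = dot v v.
Proof. by rewrite -expr2 sqr_enorm enorm2_dot. Qed.

Lemma ler_enorm u v : (en u <= en v) = (en2 u <= en2 v).
Proof. by rewrite ler_sqrt // enorm2_ge0. Qed.

Lemma enorm2_eq0 v : en2 v = 0 -> v = 0.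
Proof.
move=> /eqP; rewrite psumr_eq0 => [/allP v0|i _]; last exact: sqr_ge0.
apply/rowP => i; rewrite [RHS]mxE.
by have /implyP/(_ isT) := v0 i (mem_index_enum i); rewrite sqrf_eq0 => /eqP.
Qed.

Lemma enorm_eq0 v : en v = 0 -> v = 0.
Proof. by move=> v0; apply: enorm2_eq0; rewrite -sqr_enorm v0 expr0n. Qed.

Lemma enorm0 : en 0 = 0.
Proof. by rewrite /enorm /enorm2 big1 ?sqrtr0 // => i _; rewrite mxE expr0n. Qed.

Lemma enorm_gt0 v : v != 0 -> 0 < en v.
Proof.
move=> v0; rewrite lt_def enorm_ge0 andbT; apply/eqP => /enorm_eq0 v0'.
by rewrite v0' eqxx in v0.
Qed.

Lemma enorm2Z a v : en2 (a *: v) = a ^+ 2 * en2 v.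
Proof. by rewrite !enorm2_dot dotZl dotZr mulrA -expr2. Qed.

Lemma enormZ a v : en (a *: v) = `|a| * en v.
Proof. by rewrite /enorm enorm2Z sqrtrM ?sqr_ge0 // sqrtr_sqr. Qed.

Lemma enormN v : en (- v) = en v.
Proof. by rewrite -scaleN1r enormZ normrN1 mul1r. Qed.

Lemma enorm_distC u v : en (u - v) = en (v - u).
Proof. by rewrite -enormN opprB. Qed.

Lemma enorm_normalize v : v != 0 -> en ((en v)^-1 *: v) = 1.
Proof.
move=> v0; have := enorm_gt0 v0.
by rewrite enormZ ger0_norm ?invr_ge0 ?enorm_ge0 // => /gt_eqF/negbT/mulVf.
Qed.

Lemma le_sqr_ge0 (a b : R) : 0 <= b -> a ^+ 2 <= b ^+ 2 -> a <= b.
Proof. by move=> b0 ab; nra. Qed.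

Lemma dot_le_enorm u v : dot u v <= en u * en v.
Proof.
have [v0|v0] := eqVneq v 0; first by rewrite v0 dot0r enorm0 mulr0.
have vv : 0 < dot v v by rewrite -enorm_mul_self -expr2 exprn_gt0 ?enorm_gt0.
have := enorm2_ge0 (dot v v *: u - dot u v *: v).
rewrite enorm2_dot !dotBl !dotBr !dotZl !dotZr (dotC v u) => H.
apply: le_sqr_ge0; first by rewrite mulr_ge0 ?enorm_ge0.
rewrite exprMn !sqr_enorm !enorm2_dot; nra.
Qed.

Lemma norm_dot_le u v : `|dot u v| <= en u * en v.
Proof.
rewrite ler_norml dot_le_enorm andbT lerNl.
by have := dot_le_enorm (- u) v; rewrite dotNl enormN.
Qed.

Lemma ler_enormD u v : en (u + v) <= en u + en v.
Proof.
apply: le_sqr_ge0; first by rewrite addr_ge0 ?enorm_ge0.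
rewrite sqr_enorm enorm2_dot dotDl !dotDr (dotC v u) -!enorm_mul_self.
have := dot_le_enorm u v; nra.
Qed.

Lemma ler_enorm_dist u v w : en (u - w) <= en (u - v) + en (v - w).
Proof. by have := ler_enormD (u - v) (v - w); rewrite addrA subrK. Qed.

Lemma ler_enorm_distD u v : `|en u - en v| <= en (u - v).
Proof.
rewrite ler_norml; apply/andP; split.
  by have := ler_enormD (v - u) u; rewrite subrK enorm_distC; lra.
by have := ler_enormD (u - v) v; rewrite subrK; lra.
Qed.

Lemma mxnorm_le_enorm (v : V) : `|v| <= en v.
Proof.
rewrite [leLHS]/Num.norm /= mx_normrE; apply/bigmax_leP; split; first exact: enorm_ge0.
move=> [i j] _ /=; rewrite ord1 -sqrtr_sqr ler_sqrt ?enorm2_ge0 //.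
by rewrite /enorm2 (bigD1 j) //= lerDl sumr_ge0 // => k _; apply: sqr_ge0.
Qed.

Lemma enorm_le_mxnorm (v : V) : en v <= (d%:R + 1) * `|v|.
Proof.
apply: le_sqr_ge0; first by rewrite mulr_ge0 ?normr_ge0 // addr_ge0.
have coord_le j : `|v ord0 j| <= `|v|.
  by rewrite [leRHS]/Num.norm /= mx_normrE;
    apply: (@le_bigmax _ _ _ 0 (fun ij => `|v ij.1 ij.2|) (ord0, j)).
have : en2 v <= \sum_(i < d) `|v| ^+ 2.
  apply: ler_sum => i _; rewrite -(real_normK (num_real (v ord0 i))).
  by rewrite ler_sqr ?nnegrE ?normr_ge0.
rewrite sumr_const card_ord -mulr_natl -sqr_enorm exprMn => h.
apply: le_trans h _; have := sqr_ge0 `|v|; have : (0:R) <= d%:R by []; nra.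
Qed.

Lemma nbhs_eball (x : V) e : 0 < e -> nbhs x (eball x e).
Proof.
move=> e0; have k0 : 0 < d%:R + 1 :> R by rewrite ltr_wpDl.
apply/nbhs_ballP; exists (e / (d%:R + 1)); first exact: divr_gt0.
move=> y; rewrite -ball_normE /ball_ /= distrC => xy.
by apply: le_lt_trans (enorm_le_mxnorm _) _; rewrite mulrC -ltr_pdivlMr.
Qed.

Lemma enorm_closed (S : set V) :
  (forall k, (forall e, 0 < e -> exists2 k', S k' & en (k' - k) < e) -> S k) ->
  closed S.
Proof.
move=> S_cl k kS; apply: S_cl => e e0.
by have [k' [Sk' kk']] := kS _ (nbhs_eball k e0); exists k'.
Qed.

Lemma continuous_enorm_dist (v : V) : continuous (fun z : V => en (v - z)).
Proof.
move=> z; apply/(@cvgrPdist_lt _ _ _ (nbhs z)) => e e0.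
apply: filterS (nbhs_eball z e0) => y zy.
apply: le_lt_trans (ler_enorm_distD _ _) _.
by rewrite opprB addrC addrA subrK.
Qed.

Lemma closed_enorm_dist_le (v : V) r : closed [set z : V | en (v - z) <= r].
Proof.
apply: enorm_closed => k kS; apply/ler_addgt0Pr => e e0.
have [k' /= vk' kk'] := kS e e0.
have := ler_enorm_dist v k' k; lra.
Qed.

Lemma bounded_enorm_le (A : set V) r : (forall z, A z -> en z <= r) ->
  \forall M \near +oo, forall z, A z -> `|z| <= M.
Proof.
move=> Ar; near=> M => z /Ar zr; apply: le_trans (mxnorm_le_enorm _) _.
apply: le_trans zr _; near: M; apply: nbhs_pinfty_ge; exact: num_real.
Unshelve. all: by end_near.
Qed.

Lemma compact_enorm_bounded (A : set V) r : closed A ->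
  (forall z, A z -> en z <= r) -> compact A.
Proof. by move=> cA /bounded_enorm_le bA; apply: bounded_closed_compact bA cA. Qed.

Lemma compact_unit_sphere : compact [set e : V | en e = 1].
Proof.
apply: (compact_enorm_bounded (r := 1)) => [|e /= ->//].
apply: enorm_closed => k kS /=; apply/eqP; rewrite eq_le; apply/andP; split;
  apply/ler_addgt0Pr => g g0; have [k' /= k'1 kk'] := kS g g0;
  have := ler_enorm_distD k k'; rewrite enorm_distC ler_norml => /andP[]; lra.
Qed.

Lemma exists_nearest (S : set V) (v z0 : V) : closed S -> S z0 ->
  exists p, nearest S v p.
Proof.
move=> cS Sz0; pose r := en (v - z0).
pose A := S `&` [set z : V | en (v - z) <= r].
have cA : closed A by apply: closedI => //; apply: closed_enorm_dist_le.
have bA : \forall M \near +oo, forall z, A z -> `|z| <= M.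
  apply: (@bounded_enorm_le _ (en v + r)) => z [_ /= vz].
  by have := ler_enormD v (z - v); rewrite addrC subrK enorm_distC; lra.
have Az0 : A z0 by split => //=; rewrite /r.
have [p pA pmin] := @EVT_min_rV R d (fun z => en (v - z)) A (ex_intro _ z0 Az0)
  (bounded_closed_compact bA cA) (continuous_subspaceT (@continuous_enorm_dist v)).
rewrite inE in pA; case: pA => Sp _.
exists p; split => // z Sz; have [vz|vz] := leP (en (v - z)) r.
  by apply: pmin; rewrite inE.
by apply: le_trans (pmin z0 _) (ltW vz); rewrite inE.
Qed.

End Euclidean.

Lemma harmonic_nonincreasing {R : realType} k : harmonic k.+1 <= harmonic k :> R.
Proof. by rewrite /= lef_pV2 ?posrE ?ltr0n // ler_nat. Qed.

Lemma harmonic_le1 {R : realType} k : harmonic k <= 1 :> R.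
Proof. by rewrite /= invf_le1 ?ler1n ?ltr0n. Qed.

Section EuclideanLimits.
Variables (R : realType) (d : nat).
Local Notation V := 'rV[R]_d.
Local Notation en := (@enorm R d).
Context {T : Type} {F : set_system T} {FF : Filter F}.

Lemma cvg_enormP (u : T -> V) (x : V) : u @ F --> x <->
  forall e, 0 < e -> \forall k \near F, en (u k - x) < e.
Proof.
have k0 : 0 < d%:R + 1 :> R by rewrite ltr_wpDl.
split=> [/cvgrPdist_lt ux e e0|ux].
  apply: filterS (ux _ (divr_gt0 e0 k0)) => k; rewrite distrC => uk.
  by apply: le_lt_trans (enorm_le_mxnorm _) _; rewrite mulrC -ltr_pdivlMr.
apply/cvgrPdist_lt => e e0; apply: filterS (ux e e0) => k uk.
by rewrite distrC; apply: le_lt_trans (mxnorm_le_enorm _) uk.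
Qed.

Lemma cvg_enorm_dist0 (u : T -> V) (x : V) : u @ F --> x -> en (u k - x) @[k --> F] --> 0.
Proof.
move/cvg_enormP => ux; apply/cvgr0Pnorm_lt => e /ux.
by apply: filterS => k; rewrite ger0_norm ?enorm_ge0.
Qed.

Lemma cvg_dist_le (f g : T -> R) (l : R) : g @ F --> 0 ->
  (\forall k \near F, `|l - f k| <= g k) -> f @ F --> l.
Proof.
move=> g0 fg; apply/cvgrPdist_lt => e e0.
apply: (@filterS2 _ _ _ _ _ _ _ fg (cvgr0_norm_lt _ g0 _ e0)) => k lf ge.
exact: le_lt_trans lf (le_lt_trans (ler_norm _) ge).
Qed.

Lemma cvg_enorm_le (u : T -> V) (x : V) (g : T -> R) : g @ F --> 0 ->
  (\forall k \near F, en (u k - x) <= g k) -> u @ F --> x.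
Proof.
move=> g0 ug; apply/cvg_enormP => e e0.
by apply: (@filterS2 _ _ _ _ _ _ _ ug (cvgr_lt _ g0 _ e0)) => k; apply: le_lt_trans.
Qed.

Lemma cvg_enorm (u : T -> V) (x : V) : u @ F --> x -> en (u k) @[k --> F] --> en x.
Proof.
move=> /cvg_enorm_dist0 ux; apply: cvg_dist_le ux _; apply: nearW => k.
by rewrite enorm_distC; apply: ler_enorm_distD.
Qed.

Lemma cvg_dot (u v : T -> V) (a b : V) : u @ F --> a -> v @ F --> b ->
  dot (u k) (v k) @[k --> F] --> dot a b.
Proof.
move=> ua vb.
have g0 : en (u k - a) * en (v k) + en a * en (v k - b) @[k --> F] --> 0.
  suff : en (u k - a) * en (v k) + en a * en (v k - b) @[k --> F]
      --> 0 * en b + en a * 0 by rewrite mul0r mulr0 addr0.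
  apply: cvgD; first exact: cvgM (cvg_enorm_dist0 ua) (cvg_enorm vb).
  exact: cvgMl_tmp (cvg_enorm_dist0 vb).
apply: cvg_dist_le g0 _; apply: nearW => k.
have -> : dot a b - dot (u k) (v k) = - (dot (u k - a) (v k) + dot a (v k - b)).
  by rewrite dotBl dotBr; ring.
rewrite normrN; apply: le_trans (ler_normD _ _) _.
by apply: lerD; apply: norm_dot_le.
Qed.

Lemma cvg_dotr (v : T -> V) (a b : V) : v @ F --> b ->
  dot a (v k) @[k --> F] --> dot a b.
Proof. by apply: (cvg_dot (u := fun=> a)); exact: cvg_cst. Qed.

End EuclideanLimits.

Section Cones.
Variables (R : realType) (d : nat).
Local Notation V := 'rV[R]_d.
Local Notation en := (@enorm R d).
Local Notation en2 := (@enorm2 R d).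

Definition cone (K : set V) : Prop := forall s k, 0 <= s -> K k -> K (s *: k).

Definition polar (K : set V) : set V := [set k | forall n, K n -> dot n k <= 0].

Lemma polar0 K : polar K 0.
Proof. by move=> n _; rewrite dot0r. Qed.

Lemma polar_cone K : cone (polar K).
Proof. by move=> s k s0 Kk n Kn; rewrite dotZr mulr_ge0_le0 // Kk. Qed.

Lemma closed_polar K : closed (polar K).
Proof.
move=> k; rewrite closureEcvg => -[G PG [Gk PK]] n Kn.
apply: (ler_cvg_to (cvg_dotr (v := id) Gk) (cvg_cst 0)).
by apply: PK => k' Pk'; apply: Pk'.
Qed.

(* [s |-> |w - s p|^2] is minimal at [s = 1] on [s >= 0]: compare with [s = <w, p> / |p|^2] *)
Lemma nearest_cone_dot K w p : cone K -> nearest K w p -> dot w p = dot p p.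
Proof.
move=> coneK [Kp pmin].
have Hs s : 0 <= s -> dot (w - p) (w - p) <= dot (w - s *: p) (w - s *: p).
  by move=> s0; rewrite -!enorm2_dot -ler_enorm; apply/pmin/coneK.
set c := dot w p; set m := dot p p; set W := dot w w.
have E s : dot (w - s *: p) (w - s *: p) = W - 2 * s * c + s ^+ 2 * m.
  by rewrite dotBl !dotBr !dotZl !dotZr (dotC p w) /c /m /W; ring.
have E1 : dot (w - p) (w - p) = W - 2 * c + m.
  by rewrite -[in LHS](scale1r p) E; ring.
have [p0|p0] := eqVneq p 0; first by rewrite /c /m p0 !dot0r.
have m0 : 0 < m by rewrite /m -enorm_mul_self -expr2 exprn_gt0 ?enorm_gt0.
have c0 : 0 <= c by have := Hs 0 (lexx 0); rewrite E E1; nra.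
have := Hs (c / m) (divr_ge0 c0 (ltW m0)); rewrite E E1.
have -> : W - 2 * (c / m) * c + (c / m) ^+ 2 * m = W - c * c / m.
  by field; rewrite gt_eqF.
have hm : c * c / m * m = c * c by rewrite divfK ?gt_eqF.
move=> h; have h2 : (m - c) ^+ 2 <= 0 by nra.
have : (m - c) ^+ 2 == 0 by rewrite eq_le h2 sqr_ge0.
by rewrite sqrf_eq0 subr_eq0 => /eqP ->.
Qed.

Lemma nearest_cone_ge K w p k : cone K -> nearest K w p -> K k ->
  2 * dot w k - dot k k <= dot p p.
Proof.
move=> coneK np Kk; have wp := nearest_cone_dot coneK np.
case: np => _ pmin; have := pmin k Kk; rewrite ler_enorm !enorm2_dot.
by rewrite !dotBl !dotBr (dotC k w) (dotC p w) wp; lra.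
Qed.

Lemma nearest_convex_cone_polar K w p : cone K ->
  (forall k1 k2, K k1 -> K k2 -> K (k1 + k2)) -> nearest K w p -> polar K (w - p).
Proof.
move=> coneK addK [Kp pmin] n Kn; rewrite dotC leNgt; apply/negP => c0.
set c := dot (w - p) n in c0.
have [n0|n0] := eqVneq n 0; first by rewrite /c n0 dot0r ltxx in c0.
have m0 : 0 < dot n n by rewrite -enorm_mul_self -expr2 exprn_gt0 ?enorm_gt0.
pose s := c / dot n n; have s0 : 0 < s by rewrite divr_gt0.
have := pmin (p + s *: n) (addK _ _ Kp (coneK _ _ (ltW s0) Kn)).
rewrite ler_enorm !enorm2_dot opprD addrA !dotBr !dotBl !dotZl !dotZr.
have -> : s * (s * dot n n) = s * c by rewrite /s; field; rewrite gt_eqF.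
have hc : c = dot w n - dot p n by rewrite /c dotBl.
rewrite !(dotC n); nra.
Qed.

(* [|p v|^2] is the supremum over [k \in K] of the affine functions [v |-> 2 <v, k> - |k|^2] *)
Lemma nearest_cone_convex K (p : V -> V) : cone K ->
  (forall v, nearest K v (p v)) -> convex_fun (fun v => en (p v) ^+ 2).
Proof.
move=> coneK np u w s /andP[s0 s1]; rewrite !sqr_enorm !enorm2_dot.
set v := s *: u + (1 - s) *: w; have Kp : K (p v) by case: (np v).
have vp := nearest_cone_dot coneK (np v).
have up := nearest_cone_ge coneK (np u) Kp; have wp := nearest_cone_ge coneK (np w) Kp.
have : dot v (p v) = s * dot u (p v) + (1 - s) * dot w (p v) by rewrite dotDl !dotZl.
have s1' : 0 <= 1 - s by rewrite subr_ge0.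
have := ler_wpM2l s0 up; have := ler_wpM2l s1' wp; nra.
Qed.

End Cones.

Arguments closed_polar {R d} K.
Arguments polar0 {R d K}.

Section ProximalNormals.
Variables (R : realType) (d : nat).
Local Notation V := 'rV[R]_d.
Local Notation en := (@enorm R d).
Local Notation en2 := (@enorm2 R d).
Variables (Om : set V) (eta : R).

(* for [y \in Om] this is the proximal normal cone [N^P(Om, y)] *)
Definition quad_normal (y : V) : set V :=
  [set n | exists C, forall y', Om y' -> dot n (y' - y) <= C * en2 (y' - y)].

(* for [|n| = 1] this says that [Om] misses the open ball [B_eta(y + eta n)] *)
Definition eta_normal (y : V) : set V :=
  [set n | forall y', Om y' -> 2 * eta * dot n (y' - y) <= en n * en2 (y' - y)].

Lemma eta_normal0 y : eta_normal y 0.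
Proof. by move=> y' _; rewrite dot0l enorm0 mul0r mulr0. Qed.

Lemma eta_normal_cone y : cone (eta_normal y).
Proof.
move=> s n s0 Nn y' Oy'; rewrite dotZl enormZ ger0_norm //.
have := Nn y' Oy'; have := enorm2_ge0 (y' - y); have := enorm_ge0 n; nra.
Qed.

Lemma quad_normalD y n1 n2 : quad_normal y n1 -> quad_normal y n2 ->
  quad_normal y (n1 + n2).
Proof.
move=> [C1 H1] [C2 H2]; exists (C1 + C2) => y' Oy'.
by rewrite dotDl mulrDl lerD ?H1 ?H2.
Qed.

Lemma quad_normal_gt0 y n : quad_normal y n ->
  exists2 C, 0 < C & forall y', Om y' -> dot n (y' - y) <= C * en2 (y' - y).
Proof.
move=> [C HC]; exists (`|C| + 1) => [|y' Oy']; first by rewrite ltr_wpDl.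
apply: le_trans (HC y' Oy') _; rewrite ler_wpM2r ?enorm2_ge0 //.
by apply: le_trans (ler_norm C) _; rewrite lerDl.
Qed.

Lemma nearest_quad_normal z t u : 0 < t -> nearest Om (z + t *: u) z ->
  quad_normal z u.
Proof.
move=> t0 [Oz zmin]; exists (2 * t)^-1 => y' Oy'.
have := zmin y' Oy'; rewrite ler_enorm !enorm2_dot.
have -> : z + t *: u - z = t *: u by row_ring.
have -> : z + t *: u - y' = t *: u - (y' - z) by row_ring.
set a := y' - z; clearbody a; rewrite dotBl !dotBr !dotZl !dotZr (dotC a u) => h.
by rewrite mulrC ler_pdivlMr ?mulr_gt0 //; nra.
Qed.

Lemma interior_quad_normal y n : interior Om y -> quad_normal y n -> n = 0.
Proof.
move=> /nbhs_ballP [r /= r0 yrOm] /quad_normal_gt0 [C C0 HC].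
apply/eqP; apply: contraT => n0; have n_gt0 := enorm_gt0 n0.
pose s := Num.min (r / (2 * en n)) (1 / (2 * C)).
have s0 : 0 < s by rewrite lt_min !divr_gt0 ?mulr_gt0.
have sn : s * en n < r.
  have : s <= r / (2 * en n) by rewrite ge_min lexx.
  by rewrite ler_pdivlMr ?mulr_gt0 //; have := mulr_gt0 s0 n_gt0; lra.
have sC : s * C < 1.
  have : s <= 1 / (2 * C) by rewrite ge_min lexx orbT.
  by rewrite ler_pdivlMr ?mulr_gt0 //; have := mulr_gt0 s0 C0; lra.
have Oys : Om (y + s *: n).
  apply: yrOm; rewrite -ball_normE /ball_ /=; apply: le_lt_trans (mxnorm_le_enorm _) _.
  have -> : y - (y + s *: n) = - s *: n by row_ring.
  by rewrite enormZ normrN ger0_norm ?ltW.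
have := HC _ Oys; have -> : y + s *: n - y = s *: n by row_ring.
rewrite dotZr enorm2Z -enorm2_dot => h.
have n2 : 0 < en2 n by rewrite -sqr_enorm exprn_gt0.
have := mulr_gt0 s0 n2; nra.
Qed.

Lemma quad_normal_prox_normal y n : Om y -> quad_normal y n -> n != 0 ->
  prox_normal Om y ((en n)^-1 *: n).
Proof.
move=> Oy /quad_normal_gt0 [C C0 HC] n0; have n_gt0 := enorm_gt0 n0.
exists (en n / (2 * C)); first by rewrite divr_gt0 ?mulr_gt0.
split => // z Oz; rewrite ler_enorm !enorm2_dot.
set a := en n / (2 * C); set e := (en n)^-1 *: n.
have -> : y + a *: e - y = a *: e by row_ring.
have -> : y + a *: e - z = a *: e - (z - y) by row_ring.
have := HC z Oz; set b := z - y; clearbody b => nb.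
suff key : 2 * dot (a *: e) b <= en2 b.
  by rewrite dotBl !dotBr (dotC b (a *: e)) -(enorm2_dot b); lra.
have -> : a *: e = (2 * C)^-1 *: n.
  by rewrite /a /e scalerA mulrAC mulfV ?gt_eqF // mul1r.
have -> : 2 * dot ((2 * C)^-1 *: n) b = dot n b / C.
  by rewrite dotZl; field; rewrite gt_eqF.
by rewrite ler_pdivrMr // mulrC.
Qed.

Hypothesis eta_gt0 : 0 < eta.

Lemma eta_normal_quad y : eta_normal y `<=` quad_normal y.
Proof.
move=> n Nn; exists (en n / (2 * eta)) => y' Oy'.
by rewrite mulrAC ler_pdivlMr ?mulr_gt0 // mulrC Nn.
Qed.

Lemma eta_normal_cvg {T : topologicalType} (F : set_system T) {FF : ProperFilter F}
    (z m : T -> V) (y n : V) :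
  z @ F --> y -> m @ F --> n -> (\forall k \near F, eta_normal (z k) (m k)) ->
  eta_normal y n.
Proof.
move=> zy mn Nzm y' Oy'; rewrite enorm2_dot.
have yz : y' - z k @[k --> F] --> y' - y by apply: cvgB => //; exact: cvg_cst.
apply: (ler_cvg_to (cvgMl_tmp (cvg_dot mn yz)) (cvgM (cvg_enorm mn) (cvg_dot yz yz))).
by apply: filterS Nzm => k /(_ y' Oy'); rewrite enorm2_dot.
Qed.

Lemma closed_eta_normal y : closed (eta_normal y).
Proof.
move=> n; rewrite closureEcvg => -[G PG [Gn NG]].
by apply: (eta_normal_cvg (z := fun=> y) (m := id) (cvg_cst y) Gn); apply: NG.
Qed.

Lemma clarke_tangent_sub_polar y : Om y -> clarke_tangent Om y `<=` polar (eta_normal y).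
Proof.
move=> Oy w Tw n Nn.
have [v [vw Ov]] := Tw harmonic (fun=> y) harmonic_gt0 harmonic_nonincreasing
  cvg_harmonic (fun=> Oy) (cvg_cst y).
have vk k : 2 * eta * dot n (v k) <= en n * (harmonic k * dot (v k) (v k)).
  have := Nn _ (Ov k); rewrite addrAC subrr add0r dotZr enorm2Z -enorm2_dot => h.
  rewrite -(ler_pM2l (harmonic_gt0 k)); lra.
have lhs : 2 * eta * dot n (v k) @[k --> \oo] --> 2 * eta * dot n w.
  by apply: cvgMl_tmp; apply: cvg_dotr.
have rhs : en n * (harmonic k * dot (v k) (v k)) @[k --> \oo] --> en n * (0 * dot w w).
  by apply: cvgMl_tmp; apply: (cvgM cvg_harmonic); apply: cvg_dot.
have : 2 * eta * dot n w <= en n * (0 * dot w w) by exact: ler_cvg_to lhs rhs (nearW _ vk).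
rewrite mul0r mulr0; have := eta_gt0; nra.
Qed.

(* outer semicontinuity of [eta_normal], read on a vector of the polar at [y] *)
Lemma polar_eta_normal_near y w : polar (eta_normal y) w -> forall eps, 0 < eps ->
  exists2 del, 0 < del & forall z, en (z - y) < del ->
    forall n, eta_normal z n -> dot n w <= eps * en n.
Proof.
move=> Pw eps eps0; apply: contrapT => no_del.
have bad k : exists p : V * V,
    [/\ en (p.1 - y) < harmonic k, eta_normal p.1 p.2, en p.2 = 1 & eps < dot p.2 w].
  apply: contrapT => nk; apply: no_del; exists (harmonic k) => [|z zy n Nn].
    exact: harmonic_gt0.
  rewrite leNgt; apply/negP => wn; apply: nk.
  have n0 : n != 0 by apply: contraTneq wn => ->; rewrite dot0l enorm0 mulr0 ltxx.
  exists (z, (en n)^-1 *: n); split => //=.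
  - by apply: eta_normal_cone Nn; rewrite invr_ge0 enorm_ge0.
  - exact: enorm_normalize.
  - by rewrite dotZl mulrC ltr_pdivlMr ?enorm_gt0.
have [p Hp] := choice bad.
pose K := [set z | en (y - z) <= 1] `*` [set e : V | en e = 1].
have cK : compact K.
  apply: compact_setX; last exact: compact_unit_sphere.
  apply: (compact_enorm_bounded (r := en y + 1)) => [|z /= yz].
    exact: closed_enorm_dist_le.
  by have := ler_enormD y (z - y); rewrite addrC subrK enorm_distC; lra.
have pK : \forall k \near \oo, K (p k).
  apply: nearW => k; have [yk _ e1 _] := Hp k; split => //=.
  by rewrite enorm_distC ltW // (lt_le_trans yk (harmonic_le1 k)).
have [[zc ec] [_]] := cK (p @ \oo) _ pK; rewrite cluster_cvgE => -[G PG [Gc pG]].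
have Gy : fst @ G --> y.
  apply/cvg_enormP => e e0; apply: pG.
  apply: filterS (cvgr_lt _ cvg_harmonic _ e0) => k; case: (Hp k) => + _ _ _.
  exact: lt_trans.
have Ge : snd @ G --> ec by apply: cvg_trans (cvg_app snd Gc) _; exact: cvg_snd.
have Gp (X : set (V * V)) : (forall k, X (p k)) -> G X.
  by move=> Xp; apply: pG; apply: filterS pK => k _; apply: Xp.
have Nec : eta_normal y ec.
  by apply: (eta_normal_cvg Gy Ge); apply: Gp => k; case: (Hp k).
have : eps <= dot ec w.
  apply: (ler_cvg_to (cvg_cst eps) (cvg_dot Ge (cvg_cst w))).
  by apply: Gp => k; case: (Hp k) => _ _ _ /ltW.
by have := Pw ec Nec; lra.
Qed.

Hypothesis prox_regular_Om : prox_regular Om eta.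

Lemma prox_normal_eta_normal y e : boundary Om y -> prox_normal Om y e ->
  en e = 1 -> eta_normal y e.
Proof.
move=> by_ pe e1 y' Oy'; rewrite e1 mul1r.
have far : eta <= en (y' - (y + eta *: e)).
  rewrite leNgt; apply/negP => close.
  have : (eball (y + eta *: e) eta `&` Om) y' by [].
  by rewrite (prox_regular_Om by_ pe e1).
have := ler_pM (ltW eta_gt0) (ltW eta_gt0) far far; rewrite enorm_mul_self.
have -> : y' - (y + eta *: e) = (y' - y) - eta *: e by row_ring.
set a := y' - y; clearbody a.
rewrite dotBl !dotBr !dotZl !dotZr (dotC a e) -(enorm2_dot a) -(enorm_mul_self e) e1.
lra.
Qed.

Lemma quad_normal_eta_normal y : Om y -> quad_normal y `<=` eta_normal y.
Proof.
move=> Oy n qn; have [->|n0] := eqVneq n 0; first exact: eta_normal0.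
have by_ : boundary Om y.
  split; first exact: subset_closure.
  by move=> /interior_quad_normal /(_ qn) /eqP; rewrite (negbTE n0).
have := prox_normal_eta_normal by_ (quad_normal_prox_normal Oy qn n0) (enorm_normalize n0).
move=> /(eta_normal_cone (enorm_ge0 n)).
by rewrite scalerA mulfV ?scale1r // lt0r_neq0 ?enorm_gt0.
Qed.

Lemma eta_normalD y n1 n2 : Om y -> eta_normal y n1 -> eta_normal y n2 ->
  eta_normal y (n1 + n2).
Proof.
by move=> Oy N1 N2; apply/quad_normal_eta_normal/quad_normalD; try apply: eta_normal_quad.
Qed.

Hypothesis closed_Om : closed Om.

Lemma nearest_residual yk z t w u : Om yk -> 0 < t ->
  nearest Om (yk + t *: w) z -> z + t *: u = yk + t *: w ->
  [/\ eta_normal z u, en u <= en w, en (z - yk) <= 2 * t * en w &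
      eta * en2 u <= eta * dot u w + 2 * t * en w ^+ 3].
Proof.
move=> Oyk t0 nz zu; have [Oz zmin] := nz.
have Nu : eta_normal z u.
  by apply: quad_normal_eta_normal => //; apply: (nearest_quad_normal t0); rewrite zu.
have uw : en u <= en w.
  have := zmin yk Oyk; have -> : yk + t *: w - z = t *: u by rewrite -zu; row_ring.
  have -> : yk + t *: w - yk = t *: w by row_ring.
  by rewrite !enormZ (ger0_norm (ltW t0)) ler_pM2l.
have wu : en (w - u) <= 2 * en w.
  by apply: le_trans (ler_enorm_dist w 0 u) _; rewrite subr0 sub0r enormN; lra.
have zyk : z - yk = t *: (w - u).
  by rewrite -[in LHS](addrK (t *: u) z) zu; row_ring.
split => //.
  by rewrite zyk enormZ (ger0_norm (ltW t0)) (mulrC 2) -mulrA ler_pM2l.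
have := Nu yk Oyk; rewrite -opprB zyk -scalerN opprB.
rewrite dotZr enorm2Z dotBr -(enorm2_dot u) => h.
have {}h : 2 * eta * (en2 u - dot u w) <= en u * t * en2 (u - w).
  by rewrite -(ler_pM2l t0); move: h; rewrite expr2; lra.
have uw2 : en2 (u - w) <= (2 * en w) ^+ 2.
  rewrite -sqr_enorm enorm_distC; have := enorm_ge0 (w - u); nra.
have : en u * t * en2 (u - w) <= en w * t * (2 * en w) ^+ 2.
  apply: ler_pM => //; [|exact: enorm2_ge0|].
    by rewrite mulr_ge0 ?enorm_ge0 // ltW.
  by rewrite ler_wpM2r // ltW.
lra.
Qed.

Lemma polar_sub_clarke_tangent y : polar (eta_normal y) `<=` clarke_tangent Om y.
Proof.
move=> w Pw t ys t0 _ t_0 Oys ysy.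
have [z Hz] := choice (fun k => exists_nearest (ys k + t k *: w) closed_Om (Oys k)).
pose u k := w - (t k)^-1 *: (z k - ys k).
have zu k : z k + t k *: u k = ys k + t k *: w.
  by rewrite /u scalerBr scalerA mulfV ?gt_eqF // scale1r; row_ring.
have res k := nearest_residual (Oys k) (t0 k) (Hz k) (zu k).
exists (fun k => (t k)^-1 *: (z k - ys k)); split; last first.
  by move=> k; rewrite scalerA mulfV ?gt_eqF // scale1r addrC subrK; case: (Hz k).
have zy : z @ \oo --> y.
  apply: (cvg_enorm_le (g := fun k => 2 * t k * en w + en (ys k - y))).
    suff : 2 * t k * en w + en (ys k - y) @[k --> \oo] --> 2 * 0 * en w + 0.
      by rewrite mulr0 mul0r addr0.
    apply: cvgD; last exact: cvg_enorm_dist0.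
    by apply: cvgMr_tmp; apply: cvgMl_tmp.
  apply: nearW => k; apply: le_trans (ler_enorm_dist _ (ys k) _) _.
  by case: (res k) => _ _ zys _; rewrite lerD2r.
have small e : 0 < e -> \forall k \near \oo, en2 (u k) < e ^+ 2.
  move=> e0; have w0 := enorm_ge0 w; have e20 : 0 < e ^+ 2 by rewrite exprn_gt0.
  pose eps := e ^+ 2 / (2 * (en w + 1)).
  have eps0 : 0 < eps by rewrite divr_gt0 // mulr_gt0 // ltr_wpDl.
  have epsw : eps * (en w + 1) = e ^+ 2 / 2 by rewrite /eps; field; lra.
  have [del del0 Hdel] := polar_eta_normal_near Pw eps0.
  pose tau := eta * e ^+ 2 / (4 * (en w ^+ 3 + 1)).
  have w3 : 0 <= en w ^+ 3 by rewrite exprn_ge0.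
  have tau0 : 0 < tau by rewrite divr_gt0 ?mulr_gt0 //; lra.
  have tauw : tau * (4 * (en w ^+ 3 + 1)) = eta * e ^+ 2 by rewrite divfK //; lra.
  near=> k; have [Nu uw _ quad] := res k.
  have tk : t k < tau by near: k; exact: cvgr_lt _ t_0 _ tau0.
  have ze : en (z k - y) < del by near: k; move/cvg_enormP : zy; apply.
  have uwk := Hdel _ ze _ Nu.
  have := ler_wpM2l (ltW eps0) uw; have := enorm_ge0 (u k); have := t0 k.
  have := eta_gt0; nra.
apply/cvg_enormP => e e0; apply: filterS (small e e0) => k.
have -> : (t k)^-1 *: (z k - ys k) - w = - u k by rewrite /u opprB.
by rewrite enormN -sqr_enorm => uk; have := enorm_ge0 (u k); nra.
Unshelve. all: by end_near.
Qed.

Lemma clarke_tangent_polar y : Om y -> clarke_tangent Om y = polar (eta_normal y).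
Proof.
move=> Oy; apply/seteqP; split;
  [exact: clarke_tangent_sub_polar | exact: polar_sub_clarke_tangent].
Qed.

Lemma clarke_tangent_cone y : Om y -> cone (clarke_tangent Om y).
Proof. by move=> Oy; rewrite clarke_tangent_polar //; apply: polar_cone. Qed.

Lemma nearest_proj_tangent x v : Om x ->
  nearest (clarke_tangent Om x) v (proj_tangent Om x v).
Proof.
move=> Ox; apply: xgetPex; rewrite clarke_tangent_polar //.
by have [p np] := exists_nearest v (closed_polar (eta_normal x)) polar0; exists p.
Qed.

Lemma proj_tangent_convex x : Om x ->
  convex_fun (fun v => en (proj_tangent Om x v) ^+ 2).
Proof.
move=> Ox; apply: (nearest_cone_convex (clarke_tangent_cone Ox)).
by move=> v; apply: nearest_proj_tangent.
Qed.

(* [q], the projection of [p] onto [eta_normal y], is small for [y] near [x], and [p - q]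
   lies in [T(Om, y)] by Moreau's decomposition *)
Lemma proj_tangent_near x v eps : Om x -> 0 < eps ->
  exists2 del, 0 < del & forall y w, Om y -> en (y - x) < del ->
    let p := proj_tangent Om x v in
    dot p p - 2 * en (w - v) * en p - 2 * en w * eps <=
    dot (proj_tangent Om y w) (proj_tangent Om y w).
Proof.
move=> Ox eps0; have np := nearest_proj_tangent v Ox.
set p := proj_tangent Om x v in np *.
have Pp : polar (eta_normal x) p by rewrite -clarke_tangent_polar //; case: np.
have [del del0 Hdel] := polar_eta_normal_near Pp eps0.
exists del => // y w Oy yx /=.
have [q nq] := exists_nearest p (@closed_eta_normal y) (eta_normal0 y).
have qq := nearest_cone_dot (@eta_normal_cone y) nq.
have Tpq : clarke_tangent Om y (p - q).
  rewrite clarke_tangent_polar //.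
  apply: nearest_convex_cone_polar nq => [|n1 n2]; first exact: eta_normal_cone.
  exact: eta_normalD.
have := nearest_cone_ge (clarke_tangent_cone Oy) (nearest_proj_tangent w Oy) Tpq.
have qe : en q <= eps.
  have := Hdel y yx q (proj1 nq); rewrite dotC qq -enorm_mul_self => h.
  have := enorm_ge0 q; nra.
have wq : dot w q <= en w * eps.
  by apply: le_trans (dot_le_enorm w q) _; rewrite ler_wpM2l ?enorm_ge0.
have wvp : - (en (w - v) * en p) <= dot (w - v) p.
  by rewrite lerNl -dotNl -enormN; apply: dot_le_enorm.
have vp := nearest_cone_dot (clarke_tangent_cone Ox) np.
have q2 : 0 <= dot q q by rewrite -enorm2_dot enorm2_ge0.
rewrite !dotBl !dotBr (dotC q p) qq in wvp *; lra.
Qed.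

Lemma proj_tangent_lsc :
  lsc_on (Om `*` setT) (fun xv : V * V => en (proj_tangent Om xv.1 xv.2) ^+ 2).
Proof.
move=> [x v] [/= Ox _] a; rewrite sqr_enorm enorm2_dot.
set p := proj_tangent Om x v => ap.
have v0 := enorm_ge0 v; have p0 := enorm_ge0 p.
pose G := dot p p - a; have G0 : 0 < G by rewrite subr_gt0.
pose eps := G / (4 * (en v + 1)).
have eps0 : 0 < eps by rewrite divr_gt0 // mulr_gt0 // ltr_wpDl.
have epsv : eps * (4 * (en v + 1)) = G by rewrite divfK // gt_eqF // mulr_gt0 // ltr_wpDl.
have [del del0 Hdel] := proj_tangent_near v Ox eps0.
pose r := Num.min (Num.min del 1) (G / (8 * (en p + 1))).
have r0 : 0 < r by rewrite !lt_min del0 ltr01 divr_gt0 // mulr_gt0 // ltr_wpDl.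
have [rdel r1 rp] : [/\ r <= del, r <= 1 & r * (8 * (en p + 1)) <= G].
  split; rewrite ?ge_min ?lexx ?orbT //.
  by rewrite -ler_pdivlMr ?mulr_gt0 ?ltr_wpDl // ge_min lexx orbT.
exists (eball x r `*` eball v r) => [|[y w] [/= yx wv] [/= Oy _]].
  by exists (eball x r, eball v r) => //; split; apply: nbhs_eball.
rewrite sqr_enorm enorm2_dot /eball /= in yx wv *.
have := Hdel y w Oy (lt_le_trans yx rdel); rewrite /= -/p.
have ww : en w <= en v + 1.
  by have := ler_enormD (w - v) v; rewrite subrK; lra.
have wvp : en (w - v) * en p <= r * (en p + 1).
  by apply: ler_pM; rewrite ?enorm_ge0 ?lerDl // ltW.
have := ler_wpM2r (ltW eps0) ww; rewrite /G in epsv rp; lra.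
Qed.

End ProximalNormals.

Unset Implicit Arguments.
Theorem proposition2p2 (R : realType) (d : nat) (Om : set 'rV[R]_d) (eta : R) :
  0 < eta -> closed Om -> prox_regular Om eta ->
  lsc_on (Om `*` setT)
    (fun xv : 'rV[R]_d * 'rV[R]_d => enorm (proj_tangent Om xv.1 xv.2) ^+ 2)
  /\ (forall x, Om x -> convex_fun (fun v => enorm (proj_tangent Om x v) ^+ 2)).
Proof.
move=> eta_gt0 closed_Om prox_regular_Om; split.
  exact: proj_tangent_lsc eta_gt0 prox_regular_Om closed_Om.
exact: proj_tangent_convex eta_gt0 prox_regular_Om closed_Om.
Qed.
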